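(* Let $W$ be a one-dimensional two-sided Brownian motion on the canonical space $(\Omega,\mathcal F,P)$ with shift $(\theta_t\omega)(s)=W(t+s)-W(t)$, and consider the Stratonovich SDE on $\mathbb R^2$ $$dx=(x-y-x(x^2+y^2))\,dt+x\circ dW_t,\qquad dy=(x+y-y(x^2+y^2))\,dt+y\circ dW_t.$$ In polar coordinates $x=\rho\cos 2\pi\alpha$, $y=\rho\sin2\pi\alpha$ its solution is $\rho(t,\alpha_0,\rho_0,\omega)=\rho_0e^{t+W_t(\omega)}\big(1+2\rho_0^2\int_0^te^{2(s+W_s(\omega))}ds\big)^{-1/2}$, $\alpha(t)=\alpha_0+t/(2\pi)$, defining a random dynamical system $\tilde\Phi(t,\omega)$ on $\mathbb R^2$. Let $\rho^*(\omega)=\big(2\int_{-\infty}^0e^{2s+2W_s(\omega)}ds\big)^{-1/2}$ and, for fixed $\alpha\in[0,1)$, $\psi^\omega(t)=(\rho^*(\omega)\cos(2\pi\alpha+t),\ \rho^*(\omega)\sin(2\pi\alpha+t))$. Then: $\rho(t,\alpha_0,\rho^*(\omega),\omega)=\rho^*(\theta_t\omega)$ for all $t$; the circle $L^\omega=\{\rho=\rho^*(\omega)\}$ satisfies $\tilde\Phi(t,\omega)L^\omega=L^{\theta_t\omega}$; $\psi^\omega(t+2\pi)=\psi^\omega(t)$ and $\tilde\Phi(t,\omega)\psi^\omega(0)=\psi^{\theta_t\omega}(t)$ for all $t$, so $\psi$ is a random periodic solution of period $2\pi$ (with random periodic curve of winding number $1$ on the cylinder $[0,1]\times\mathbb R$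 in the coordinates $(\alpha,\rho)$); and if $x(0)^2+y(0)^2\neq0$, then $x^2(t,\theta_{-t}\omega)+y^2(t,\theta_{-t}\omega)\to\rho^*(\omega)^2$ as $t\to\infty$.
   Context: A random periodic solution of a random dynamical system $\Phi$ over $(\Omega,\mathcal F,P,(\theta_t))$ with state space $\mathcal H$ is an $\mathcal F$-measurable $\psi:\Omega\times\mathbb R\to\mathcal H$, periodic in $t$ with period $T$, such that $\psi^\omega(t+T)=\psi^\omega(t)$ and $\Phi_t^\omega(\psi^\omega(t_0))=\psi^{\theta_t\omega}(t+t_0)$ for all $t,t_0$. Here $x(t,\omega),y(t,\omega)$ denote the solution components started from $(x(0),y(0))$, evaluated along the noise path $\omega$. *)

From Stdlib Require Import Reals Lra ClassicalEpsilon.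
Open Scope R_scope.

(* A noise path omega of the canonical two-sided Brownian space, identified with
   W = omega : R -> R.  [bm_path W] collects the pathwise properties holding on a
   theta-invariant set of full Wiener measure: continuity, W(0)=0, and the strong
   law of large numbers W(s)/s -> 0 as |s| -> infinity. *)
Definition bm_path (W : R -> R) : Prop :=
  (forall s, continuity_pt W s) /\ W 0 = 0 /\
  (forall eps, eps > 0 -> exists M, forall s, Rabs s >= M -> Rabs (W s) <= eps * Rabs s).

Definition shift (t : R) (W : R -> R) : R -> R := fun s => W (t + s) - W t.

(* Riemann integral \int_a^b f (value of RiemannInt; arbitrary if not integrable). *)
Definition RInt (f : R -> R) (a b : R) : R :=
  epsilon (inhabits 0)
    (fun v => exists pr : Riemann_integrable f a b, RiemannInt pr = v).

Definition RInt_minf0 (f : R -> R) : R :=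
  epsilon (inhabits 0)
    (fun l => forall eps, eps > 0 -> exists M, forall T, T >= M ->
        Rabs (RInt f (- T) 0 - l) < eps).

Definition rho_star (W : R -> R) : R :=
  / sqrt (2 * RInt_minf0 (fun s => exp (2 * s + 2 * W s))).

Definition rho_sol (t alpha0 rho0 : R) (W : R -> R) : R :=
  rho0 * exp (t + W t)
  / sqrt (1 + 2 * rho0 ^ 2 * RInt (fun s => exp (2 * (s + W s))) 0 t).

Definition alpha_sol (t alpha0 : R) : R := alpha0 + t / (2 * PI).

(* The RDS tilde Phi(t, omega) on R^2: the point with polar coordinates
   (alpha0, rho0) is sent to the point with polar coordinates
   (alpha_sol t alpha0, rho_sol t alpha0 rho0 W). *)
Definition Phi (t : R) (W : R -> R) (p : R * R) : R * R :=
  let (x, y) := p in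
  let g := exp (t + W t)
           / sqrt (1 + 2 * (x ^ 2 + y ^ 2) * RInt (fun s => exp (2 * (s + W s))) 0 t) in
  (g * (x * cos t - y * sin t), g * (x * sin t + y * cos t)).

Definition Lcirc (W : R -> R) (p : R * R) : Prop :=
  sqrt (fst p ^ 2 + snd p ^ 2) = rho_star W.

Definition psi (alpha : R) (W : R -> R) (t : R) : R * R :=
  (rho_star W * cos (2 * PI * alpha + t), rho_star W * sin (2 * PI * alpha + t)).

(* Along the noise, the radial equation is of Bernoulli type: rho^{-2} solves a linear
   equation, rho(t)^{-2} = e^{-2(t + W t)} (rho0^{-2} + 2 \int_0^t e^{2(s + W s)} ds).
   Put I(omega) = \int_{-oo}^0 e^{2(s + W s)} ds, which is finite and positive because
   W(s)/s -> 0.  Changing variables in the integral gives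
   I(theta_t omega) = e^{-2(t + W t)} (I(omega) + \int_0^t e^{2(s + W s)} ds),
   which is exactly how the flow transports rho^{-2}; hence the circle rho^{-2} = 2 I(omega),
   i.e. rho = rho^*(omega), is carried onto the circle of theta_t omega, and since the angle
   simply rotates by t, psi is an equivariant periodic curve.  Started in the past at time -t,
   the solution satisfies rho^{-2} = e^{2(-t + W(-t))} rho0^{-2} + 2 \int_{-t}^0 e^{2(s + W s)} ds,
   which tends to 2 I(omega). *)

From Pilot Require Import Defs.
From Stdlib Require Import Reals Lra ClassicalEpsilon Classical FunctionalExtensionality.
From Coquelicot Require Import Coquelicot.
Open Scope R_scope.

Lemma ex_RInt_continuous_all (g : R -> R) (a b : R) :
  (forall s, continuous g s) -> ex_RInt g a b.
Proof. intros Hg. apply (@ex_RInt_continuous R_CompleteNormedModule). intros z _. apply Hg. Qed.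

Lemma Defs_RInt_eq_RInt (g : R -> R) (a b : R) :
  (forall s, continuous g s) -> Defs.RInt g a b = RInt g a b.
Proof.
  intros Hg.
  pose proof (ex_RInt_Reals_0 _ _ _ (ex_RInt_continuous_all g a b Hg)) as pr.
  unfold Defs.RInt.
  destruct (epsilon_spec (inhabits 0)
     (fun v => exists pr : Riemann_integrable g a b, RiemannInt pr = v)) as [pr' <-].
  - exists (RiemannInt pr), pr. reflexivity.
  - symmetry. apply RInt_Reals.
Qed.

Lemma RInt_translate (g : R -> R) (c a b : R) : (forall s, continuous g s) ->
  RInt (fun s => g (s + c)) a b = RInt g (a + c) (b + c).
Proof.
  intros Hg.
  pose proof (RInt_comp_lin g 1 c a b) as H. rewrite !Rmult_1_l in H. rewrite <- H.
  - apply RInt_ext. intros x _. rewrite !Rmult_1_l. reflexivity.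
  - apply ex_RInt_continuous_all, Hg.
Qed.

Lemma RInt_exp (a b : R) : RInt exp a b = exp b - exp a.
Proof.
  apply is_RInt_unique, (is_RInt_derive exp exp).
  - intros x _. apply is_derive_exp.
  - intros x _. apply continuous_exp.
Qed.

Lemma exp_le_exp (x y : R) : x <= y -> exp x <= exp y.
Proof. intros [Hlt | ->]; [left; apply exp_increasing, Hlt | right; reflexivity]. Qed.

Lemma is_lim_p_infty_spec (F : R -> R) (l : R) :
  (forall eps, eps > 0 -> exists M, forall T, T >= M -> Rabs (F T - l) < eps)
  <-> is_lim F p_infty l.
Proof.
  rewrite <- is_lim_spec. split.
  - intros H eps. destruct (H eps (cond_pos eps)) as [M HM].
    exists M. intros T HT. apply HM. lra.
  - intros H eps Heps. destruct (H (mkposreal eps Heps)) as [M HM].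
    exists (M + 1). intros T HT. apply HM. lra.
Qed.

Lemma is_lim_translate (F : R -> R) (c l : R) :
  is_lim F p_infty l -> is_lim (fun T => F (T + c)) p_infty l.
Proof.
  intros HF. rewrite <- is_lim_p_infty_spec in *. intros eps Heps.
  destruct (HF eps Heps) as [M HM]. exists (M - c). intros T HT. apply HM. lra.
Qed.

Lemma nondecreasing_le_is_lim (F : R -> R) (l : R) :
  (forall x y, x <= y -> F x <= F y) -> is_lim F p_infty l -> forall x, F x <= l.
Proof.
  intros Hmono Hl x.
  change (Rbar_le (F x) l).
  apply (is_lim_le_loc (fun _ => F x) F p_infty); [| apply is_lim_const | exact Hl].
  exists x. intros y Hy. apply Hmono. lra.
Qed.

Lemma nondecreasing_bounded_is_lim (F : R -> R) (B : R) :
  (forall x y, x <= y -> F x <= F y) -> (forall x, F x <= B) ->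
  exists l : R, is_lim F p_infty l.
Proof.
  intros Hmono HB.
  set (range := fun v => exists x, v = F x).
  destruct (completeness range) as [l [Hub Hlub]].
  { exists B. intros v [x ->]. apply HB. }
  { exists (F 0), 0. reflexivity. }
  exists l. apply is_lim_p_infty_spec. intros eps Heps.
  assert (Happrox : exists x0, l - eps < F x0).
  { apply NNPP. intros Hnone.
    assert (l <= l - eps); [|lra].
    apply Hlub. intros v [x ->]. apply Rnot_lt_le. intros Hlt. apply Hnone. exists x. exact Hlt. }
  destruct Happrox as [x0 Hx0].
  exists x0. intros T HT.
  assert (F x0 <= F T) by (apply Hmono; lra).
  assert (F T <= l) by (apply Hub; exists T; reflexivity).
  rewrite Rabs_left1; lra.
Qed.

Lemma RInt_minf0_is_lim (g : R -> R) (l : R) : (forall s, continuous g s) ->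
  is_lim (fun T => RInt g (- T) 0) p_infty l -> RInt_minf0 g = l.
Proof.
  intros Hg Hl.
  set (P := fun l' : R => forall eps, eps > 0 -> exists M, forall T, T >= M ->
       Rabs (Defs.RInt g (- T) 0 - l') < eps).
  assert (HP : forall l' : R, P l' <-> is_lim (fun T => RInt g (- T) 0) p_infty l').
  { intros l'. rewrite <- is_lim_p_infty_spec. unfold P.
    setoid_rewrite (Defs_RInt_eq_RInt g _ 0 Hg). reflexivity. }
  change (epsilon (inhabits 0) P = l).
  pose proof (epsilon_spec (inhabits 0) P (ex_intro P l (proj2 (HP l) Hl))) as Heps.
  apply HP, is_lim_unique in Heps. rewrite (is_lim_unique _ _ _ Hl) in Heps.
  injection Heps. intros ->. reflexivity.
Qed.

Definition weight (W : R -> R) (s : R) : R := exp (2 * (s + W s)).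

Definition tail_weight (W : R -> R) (T : R) : R := RInt (weight W) (- T) 0.

Section Weight.

Variable W : R -> R.
Hypothesis W_continuous : forall s, continuous W s.

Lemma continuous_weight (s : R) : continuous (weight W) s.
Proof.
  apply continuous_exp_comp.
  apply (continuous_mult (fun _ => 2) (fun s => s + W s)).
  - apply continuous_const.
  - apply (continuous_plus (fun s => s) W); [apply continuous_id | apply W_continuous].
Qed.

Lemma continuous_shift (t s : R) : continuous (shift t W) s.
Proof.
  apply (continuous_minus (fun s => W (t + s)) (fun _ => W t)); [| apply continuous_const].
  apply (continuous_comp (fun s => t + s) W); [| apply W_continuous].
  apply (continuous_plus (fun _ => t) (fun s => s)); [apply continuous_const | apply continuous_id].
Qed.

Lemma weight_shift (t s : R) :
  weight (shift t W) s = exp (-2 * (t + W t)) * weight W (s + t).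
Proof. unfold weight, shift. rewrite <- exp_plus. f_equal. rewrite (Rplus_comm s t). ring. Qed.

Lemma RInt_weight_shift (t a b : R) :
  RInt (weight (shift t W)) a b = exp (-2 * (t + W t)) * RInt (weight W) (a + t) (b + t).
Proof.
  rewrite <- (RInt_translate (weight W) t a b continuous_weight).
  rewrite <- (RInt_scal (V := R_CompleteNormedModule)).
  - apply RInt_ext. intros x _. apply weight_shift.
  - apply ex_RInt_continuous_all. intros s.
    apply (continuous_comp (fun s => s + t) (weight W)); [| apply continuous_weight].
    apply (continuous_plus (fun s => s) (fun _ => t)); [apply continuous_id | apply continuous_const].
Qed.

Lemma RInt_weight_nonneg (a b : R) : a <= b -> 0 <= RInt (weight W) a b.
Proof.
  intros Hab. apply RInt_ge_0; [exact Hab | apply ex_RInt_continuous_all, continuous_weight |].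
  intros x _. left. apply exp_pos.
Qed.

Lemma RInt_weight_Chasles (a b c : R) :
  RInt (weight W) a b + RInt (weight W) b c = RInt (weight W) a c.
Proof. apply (RInt_Chasles (V := R_CompleteNormedModule)); apply ex_RInt_continuous_all, continuous_weight. Qed.

Lemma tail_weight_nondecreasing (x y : R) : x <= y -> tail_weight W x <= tail_weight W y.
Proof.
  intros Hxy. unfold tail_weight. rewrite <- (RInt_weight_Chasles (- y) (- x) 0).
  pose proof (RInt_weight_nonneg (- y) (- x) ltac:(lra)). lra.
Qed.

Lemma tail_weight_lim_pos (I : R) : is_lim (tail_weight W) p_infty I -> 0 < I.
Proof.
  intros HI. apply Rlt_le_trans with (tail_weight W 1).
  - apply RInt_gt_0; [lra | intros x _; apply exp_pos | intros x _; apply continuous_weight].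
  - exact (nondecreasing_le_is_lim _ _ tail_weight_nondecreasing HI 1).
Qed.

Lemma tail_weight_shift_is_lim (I t : R) : is_lim (tail_weight W) p_infty I ->
  is_lim (tail_weight (shift t W)) p_infty
    (exp (-2 * (t + W t)) * (I + RInt (weight W) 0 t)).
Proof.
  intros HI.
  apply is_lim_ext with
    (fun T => exp (-2 * (t + W t)) * (tail_weight W (T + - t) + RInt (weight W) 0 t)).
  - intros T. unfold tail_weight.
    rewrite RInt_weight_shift, Rplus_0_l.
    replace (- T + t) with (- (T + - t)) by ring.
    rewrite (RInt_weight_Chasles (- (T + - t)) 0 t). reflexivity.
  - apply (is_lim_scal_l _ _ _ (I + RInt (weight W) 0 t)).
    apply is_lim_plus'; [apply is_lim_translate, HI | apply is_lim_const].
Qed.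

Lemma rho_star_is_lim (I : R) : is_lim (tail_weight W) p_infty I -> rho_star W = / sqrt (2 * I).
Proof.
  intros HI. unfold rho_star.
  replace (fun s => exp (2 * s + 2 * W s)) with (weight W).
  - rewrite (RInt_minf0_is_lim (weight W) I continuous_weight HI). reflexivity.
  - apply functional_extensionality. intros s. unfold weight. f_equal. ring.
Qed.

Lemma rho_star_pos_is_lim (I : R) : is_lim (tail_weight W) p_infty I -> 0 < rho_star W.
Proof.
  intros HI. rewrite (rho_star_is_lim I HI).
  apply Rinv_0_lt_compat, sqrt_lt_R0. pose proof (tail_weight_lim_pos I HI). lra.
Qed.

Lemma rho_star_sq_is_lim (I : R) : is_lim (tail_weight W) p_infty I ->
  rho_star W ^ 2 = / (2 * I).
Proof.
  intros HI. rewrite (rho_star_is_lim I HI), pow_inv, pow2_sqrt; [reflexivity |].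
  pose proof (tail_weight_lim_pos I HI). lra.
Qed.

End Weight.

Lemma bm_path_continuous (W : R -> R) : bm_path W -> forall s, continuous W s.
Proof. intros [HW _] s. apply continuity_pt_filterlim, HW. Qed.

(* The law of large numbers W(s)/s -> 0 makes the weight decay like e^s at -oo. *)
Lemma bm_path_weight_le_exp (W : R -> R) : bm_path W ->
  exists M, forall s, s <= - M -> weight W s <= exp s.
Proof.
  intros [_ [_ HW]]. destruct (HW (/ 2) ltac:(lra)) as [M HM].
  exists (Rmax M 0). intros s Hs.
  pose proof (Rmax_l M 0). pose proof (Rmax_r M 0).
  assert (Habs : Rabs (W s) <= / 2 * Rabs s) by (apply HM; rewrite Rabs_left1; lra).
  rewrite (Rabs_left1 s) in Habs by lra. pose proof (Rle_abs (W s)).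
  apply exp_le_exp. lra.
Qed.

Lemma tail_weight_is_lim (W : R -> R) : bm_path W ->
  exists I : R, is_lim (tail_weight W) p_infty I.
Proof.
  intros HW. pose proof (bm_path_continuous W HW) as HWc.
  destruct (bm_path_weight_le_exp W HW) as [M HM].
  apply (nondecreasing_bounded_is_lim _ (tail_weight W M + exp (- M))).
  { apply tail_weight_nondecreasing, HWc. }
  intros T. pose proof (exp_pos (- M)). destruct (Rle_dec T M) as [HTM | HTM].
  - pose proof (tail_weight_nondecreasing W HWc T M HTM). lra.
  - unfold tail_weight. rewrite <- (RInt_weight_Chasles W HWc (- T) (- M) 0).
    assert (Hcmp : RInt (weight W) (- T) (- M) <= RInt exp (- T) (- M)).
    { apply RInt_le; [lra | apply ex_RInt_continuous_all, continuous_weight, HWc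
                     | apply ex_RInt_continuous_all, continuous_exp |].
      intros s Hs. apply HM. lra. }
    rewrite RInt_exp in Hcmp. pose proof (exp_pos (- T)). lra.
Qed.

Definition radial_factor (t : R) (W : R -> R) (r2 : R) : R :=
  exp (t + W t) / sqrt (1 + 2 * r2 * Defs.RInt (weight W) 0 t).

Definition norm2 (p : R * R) : R := fst p ^ 2 + snd p ^ 2.

Lemma Phi_polar (t : R) (W : R -> R) (x y : R) : Phi t W (x, y) =
  (radial_factor t W (norm2 (x, y)) * (x * cos t - y * sin t),
   radial_factor t W (norm2 (x, y)) * (x * sin t + y * cos t)).
Proof. reflexivity. Qed.

Lemma rho_sol_radial (t alpha0 r : R) (W : R -> R) :
  rho_sol t alpha0 r W = radial_factor t W (r ^ 2) * r.
Proof. unfold rho_sol, radial_factor, weight, Rdiv. ring. Qed.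

Lemma cos2_sin2 (u : R) : cos u ^ 2 + sin u ^ 2 = 1.
Proof. pose proof (sin2_cos2 u) as H. unfold Rsqr in H. lra. Qed.

Lemma norm2_Phi (t : R) (W : R -> R) (p : R * R) :
  norm2 (Phi t W p) = radial_factor t W (norm2 p) ^ 2 * norm2 p.
Proof.
  destruct p as [x y]. rewrite Phi_polar. set (g := radial_factor t W (norm2 (x, y))).
  unfold norm2. cbn [fst snd].
  transitivity (g ^ 2 * (x ^ 2 + y ^ 2) * (cos t ^ 2 + sin t ^ 2)); [ring |].
  rewrite cos2_sin2. ring.
Qed.

Lemma norm2_polar (r u : R) : norm2 (r * cos u, r * sin u) = r ^ 2.
Proof.
  unfold norm2. cbn [fst snd].
  transitivity (r ^ 2 * (cos u ^ 2 + sin u ^ 2)); [ring |]. rewrite cos2_sin2. ring.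
Qed.

Lemma radial_factor_sq (t : R) (W : R -> R) (r2 : R) :
  0 <= 1 + 2 * r2 * Defs.RInt (weight W) 0 t ->
  radial_factor t W r2 ^ 2 = exp (t + W t) ^ 2 / (1 + 2 * r2 * Defs.RInt (weight W) 0 t).
Proof. intros H. unfold radial_factor, Rdiv. rewrite Rpow_mult_distr, pow_inv, pow2_sqrt; auto. Qed.

Lemma pow2_inj (x y : R) : 0 <= x -> 0 <= y -> x ^ 2 = y ^ 2 -> x = y.
Proof. intros Hx Hy H. rewrite <- (sqrt_pow2 x Hx), <- (sqrt_pow2 y Hy), H. reflexivity. Qed.

Lemma Lcirc_norm2 (W : R -> R) (p : R * R) : 0 <= rho_star W ->
  Lcirc W p <-> norm2 p = rho_star W ^ 2.
Proof.
  intros Hr. unfold Lcirc, norm2. split.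
  - intros <-. rewrite pow2_sqrt; [reflexivity |]. nra.
  - intros ->. apply sqrt_pow2, Hr.
Qed.

Lemma psi_periodic (alpha : R) (W : R -> R) (t : R) :
  psi alpha W (t + 2 * PI) = psi alpha W t.
Proof.
  unfold psi.
  replace (2 * PI * alpha + (t + 2 * PI)) with (2 * PI * alpha + t + 2 * INR 1 * PI)
    by (simpl; ring).
  rewrite cos_period, sin_period. reflexivity.
Qed.

Section Flow.

Variables (W : R -> R) (I : R).
Hypothesis W_continuous : forall s, continuous W s.
Hypothesis W_tail : is_lim (tail_weight W) p_infty I.

Lemma tail_weight_shift_lim_pos (t : R) : 0 < I + RInt (weight W) 0 t.
Proof.
  pose proof (tail_weight_lim_pos _ (continuous_shift W W_continuous t) _
    (tail_weight_shift_is_lim W W_continuous I t W_tail)) as H.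
  pose proof (exp_pos (-2 * (t + W t))). nra.
Qed.

(* Squared, both sides equal e^{2(t + W t)} / (2 (I + \int_0^t weight W)). *)
Lemma radial_factor_rho_star (t : R) :
  radial_factor t W (rho_star W ^ 2) * rho_star W = rho_star (shift t W).
Proof.
  pose proof (tail_weight_lim_pos W W_continuous I W_tail) as HI.
  pose proof (tail_weight_shift_lim_pos t) as HIJ.
  pose proof (tail_weight_shift_is_lim W W_continuous I t W_tail) as Hshift.
  pose proof (continuous_shift W W_continuous t) as Hshift_cont.
  set (J := RInt (weight W) 0 t) in *.
  assert (HJ : Defs.RInt (weight W) 0 t = J)
    by apply Defs_RInt_eq_RInt, continuous_weight, W_continuous.
  assert (Hexp : exp (-2 * (t + W t)) = / exp (t + W t) ^ 2).
  { rewrite <- pow_inv, <- exp_Ropp. simpl. rewrite Rmult_1_r, <- exp_plus. f_equal. ring. }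
  assert (Hden : 0 < 1 + 2 * rho_star W ^ 2 * Defs.RInt (weight W) 0 t).
  { rewrite (rho_star_sq_is_lim W W_continuous I W_tail), HJ.
    replace (1 + 2 * / (2 * I) * J) with ((I + J) / I) by (field; lra).
    apply Rdiv_lt_0_compat; lra. }
  apply pow2_inj.
  - apply Rmult_le_pos; [| apply Rlt_le, (rho_star_pos_is_lim W W_continuous I W_tail)].
    apply Rlt_le, Rdiv_lt_0_compat; [apply exp_pos | apply sqrt_lt_R0, Hden].
  - apply Rlt_le, (rho_star_pos_is_lim _ Hshift_cont _ Hshift).
  - rewrite Rpow_mult_distr, (radial_factor_sq _ _ _ (Rlt_le _ _ Hden)), HJ.
    rewrite (rho_star_sq_is_lim _ Hshift_cont _ Hshift), (rho_star_sq_is_lim W W_continuous I W_tail).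
    rewrite Hexp. field. pose proof (exp_pos (t + W t)). lra.
Qed.

Lemma Phi_image_Lcirc (t : R) (p : R * R) :
  (exists q, Lcirc W q /\ Phi t W q = p) <-> Lcirc (shift t W) p.
Proof.
  pose proof (rho_star_pos_is_lim W W_continuous I W_tail) as Hr.
  pose proof (rho_star_pos_is_lim _ (continuous_shift W W_continuous t) _
    (tail_weight_shift_is_lim W W_continuous I t W_tail)) as Hr'.
  pose proof (radial_factor_rho_star t) as Hg.
  set (r := rho_star W) in *. set (r' := rho_star (shift t W)) in *.
  set (g := radial_factor t W (r ^ 2)) in *.
  rewrite (Lcirc_norm2 _ _ (Rlt_le _ _ Hr')). split.
  - intros [q [Hq <-]]. apply (Lcirc_norm2 _ _ (Rlt_le _ _ Hr)) in Hq.
    rewrite norm2_Phi, Hq. fold r r' g. rewrite <- Hg. ring.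
  - destruct p as [x y]. intros Hp. unfold norm2 in Hp. cbn [fst snd] in Hp. fold r' in Hp.
    (* the preimage: rotate back by -t and rescale from radius r' to radius r *)
    set (k := r / r').
    set (q := (k * (x * cos t + y * sin t), k * (- x * sin t + y * cos t))).
    assert (Hq : norm2 q = r ^ 2).
    { unfold norm2, q. cbn [fst snd].
      transitivity (k ^ 2 * (x ^ 2 + y ^ 2) * (cos t ^ 2 + sin t ^ 2)); [ring |].
      rewrite cos2_sin2, Hp. unfold k. field. lra. }
    assert (Hg0 : g <> 0) by (intros E; rewrite E in Hg; lra).
    assert (Hgk : g * k = 1) by (unfold k; rewrite <- Hg; field; lra).
    exists q. split; [apply (Lcirc_norm2 _ _ (Rlt_le _ _ Hr)), Hq |].
    unfold q at 1. rewrite Phi_polar. fold q. rewrite Hq. fold g.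
    f_equal.
    + transitivity (g * k * x * (cos t ^ 2 + sin t ^ 2)); [ring |].
      rewrite Hgk, cos2_sin2. ring.
    + transitivity (g * k * y * (cos t ^ 2 + sin t ^ 2)); [ring |].
      rewrite Hgk, cos2_sin2. ring.
Qed.

Lemma Phi_psi (alpha t t0 : R) :
  Phi t W (psi alpha W t0) = psi alpha (shift t W) (t + t0).
Proof.
  unfold psi at 1. rewrite Phi_polar, norm2_polar.
  unfold psi. rewrite <- radial_factor_rho_star.
  replace (2 * PI * alpha + (t + t0)) with ((2 * PI * alpha + t0) + t) by ring.
  rewrite (cos_plus (2 * PI * alpha + t0) t), (sin_plus (2 * PI * alpha + t0) t). f_equal; ring.
Qed.

End Flow.

Lemma norm2_Phi_pullback (W : R -> R) (t x0 y0 : R) :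
  (forall s, continuous W s) -> W 0 = 0 -> 0 <= t -> 0 < norm2 (x0, y0) ->
  norm2 (Phi t (shift (- t) W) (x0, y0))
  = / (weight W (- t) / norm2 (x0, y0) + 2 * tail_weight W t).
Proof.
  intros HWc HW0 Ht Hr0.
  set (r0 := norm2 (x0, y0)) in *. set (w := weight W (- t)). set (K := tail_weight W t).
  assert (Hw : 0 < w) by apply exp_pos.
  assert (HK : 0 <= K) by (apply RInt_weight_nonneg; [exact HWc | lra]).
  assert (Hinv_w : exp (-2 * (- t + W (- t))) = / w).
  { unfold w, weight. rewrite <- exp_Ropp. f_equal. ring. }
  assert (HD : Defs.RInt (weight (shift (- t) W)) 0 t = / w * K).
  { rewrite Defs_RInt_eq_RInt by (apply continuous_weight, continuous_shift, HWc).
    rewrite RInt_weight_shift, Hinv_w, Rplus_0_l, Rplus_opp_r by exact HWc. reflexivity. }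
  assert (Hexp : exp (t + shift (- t) W t) ^ 2 = / w).
  { rewrite <- Hinv_w. unfold shift. rewrite Rplus_opp_l, HW0. simpl.
    rewrite Rmult_1_r, <- exp_plus. f_equal. ring. }
  assert (Hden : 0 < 1 + 2 * r0 * (/ w * K)).
  { pose proof (Rinv_0_lt_compat w Hw).
    assert (0 <= r0 * (/ w * K)) by (apply Rmult_le_pos; [lra | apply Rmult_le_pos; lra]). lra. }
  rewrite norm2_Phi, radial_factor_sq; fold r0; rewrite HD; [| lra].
  rewrite Hexp. field.
  assert (0 <= K * r0) by (apply Rmult_le_pos; lra). lra.
Qed.

Lemma is_lim_exp_opp : is_lim (fun t => exp (- t)) p_infty 0.
Proof.
  apply (is_lim_ext (fun t => / exp t)); [intros t; symmetry; apply exp_Ropp |].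
  apply (is_lim_inv _ _ p_infty); [apply is_lim_exp_p | discriminate].
Qed.

Lemma pullback_is_lim (W : R -> R) (I x0 y0 : R) : bm_path W ->
  is_lim (tail_weight W) p_infty I -> 0 < norm2 (x0, y0) ->
  is_lim (fun t => norm2 (Phi t (shift (- t) W) (x0, y0))) p_infty (rho_star W ^ 2).
Proof.
  intros HW HI Hr0. pose proof (bm_path_continuous W HW) as HWc.
  rewrite (rho_star_sq_is_lim W HWc I HI).
  destruct (bm_path_weight_le_exp W HW) as [M HM].
  apply (is_lim_ext_loc (fun t => / (weight W (- t) / norm2 (x0, y0) + 2 * tail_weight W t))).
  { exists 0. intros t Ht. symmetry.
    apply norm2_Phi_pullback; [exact HWc | apply HW | lra | exact Hr0]. }
  pose proof (tail_weight_lim_pos W HWc I HI) as HIpos.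
  apply (is_lim_inv _ _ (2 * I)); [| intros E; injection E; lra].
  replace (2 * I) with (0 / norm2 (x0, y0) + 2 * I) by (unfold Rdiv; ring).
  apply is_lim_plus'; [| apply (is_lim_scal_l _ 2 _ I), HI].
  apply (is_lim_scal_r _ (/ norm2 (x0, y0)) _ 0).
  apply (is_lim_le_le_loc (fun _ => 0) (fun t => exp (- t))); [| apply is_lim_const | apply is_lim_exp_opp].
  exists M. intros t Ht. split; [apply Rlt_le, exp_pos | apply HM; lra].
Qed.

Theorem mainTheorem11 (W : R -> R) (HW : bm_path W) (alpha : R)
  (Halpha : 0 <= alpha < 1) :
  (forall t alpha0, rho_sol t alpha0 (rho_star W) W = rho_star (shift t W)) /\
  (forall t (p : R * R),
      (exists q, Lcirc W q /\ Phi t W q = p) <-> Lcirc (shift t W) p) /\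
  (forall t, psi alpha W (t + 2 * PI) = psi alpha W t) /\
  (forall t, Phi t W (psi alpha W 0) = psi alpha (shift t W) t) /\
  (forall t t0, Phi t W (psi alpha W t0) = psi alpha (shift t W) (t + t0)) /\
  (forall x0 y0 : R, x0 ^ 2 + y0 ^ 2 <> 0 ->
     forall eps, eps > 0 -> exists M, forall t, t >= M ->
       Rabs (fst (Phi t (shift (- t) W) (x0, y0)) ^ 2
             + snd (Phi t (shift (- t) W) (x0, y0)) ^ 2
             - rho_star W ^ 2) < eps).
Proof.
  pose proof (bm_path_continuous W HW) as HWc.
  destruct (tail_weight_is_lim W HW) as [I HI].
  split; [| split; [| split; [| split; [| split]]]].
  - intros t alpha0. rewrite rho_sol_radial. apply (radial_factor_rho_star W I HWc HI).
  - apply (Phi_image_Lcirc W I HWc HI).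
  - apply psi_periodic.
  - intros t. rewrite (Phi_psi W I HWc HI), Rplus_0_r. reflexivity.
  - apply (Phi_psi W I HWc HI).
  - intros x0 y0 Hr0. apply is_lim_p_infty_spec, (pullback_is_lim W I x0 y0 HW HI).
    unfold norm2. cbn [fst snd]. pose proof (pow2_ge_0 x0). pose proof (pow2_ge_0 y0). lra.
Qed.
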